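(* For every integer $k\ge 2$, $$\bigl|\zeta(k)-1-h(k)\bigr|=C(k)\le\frac13\left(1+\frac{2}{3k-1}\right)\frac{2^{-3k}}{1-2^{-2k}},$$ where $h(k)=\sum_{n=2}^{\infty}\operatorname{arctanh}(n^{-k})$ and $C(k)=\sum_{n=1}^{\infty}\frac{\zeta(k(2n+1))-1}{2n+1}$. In particular $C(k)=O(2^{-3k})$ as $k\to\infty$.
   Context: $\zeta$ denotes the Riemann zeta function. *)

From Stdlib Require Import Reals.
From Coquelicot Require Import Coquelicot.
Open Scope R_scope.

Definition zeta (s : nat) : R := Series (fun n : nat => / (INR (n + 1)) ^ s).

Definition arctanh (x : R) : R := ln ((1 + x) / (1 - x)) / 2.

(* h(k) = sum_{n>=2} arctanh(n^{-k})  (index shifted: n = m+2) *)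
Definition h_term (k : nat) (m : nat) : R := arctanh (/ (INR (m + 2)) ^ k).
Definition h (k : nat) : R := Series (h_term k).

(* C(k) = sum_{n>=1} (zeta(k(2n+1)) - 1)/(2n+1)  (index shifted: n = m+1) *)
Definition C_term (k : nat) (m : nat) : R :=
  (zeta (k * (2 * m + 3)) - 1) / INR (2 * m + 3).
Definition Cconst (k : nat) : R := Series (C_term k).

From Stdlib Require Import Reals Lra Lia.
From Coquelicot Require Import Coquelicot.
Open Scope R_scope.

(* For |x| < 1, arctanh x = sum_(j >= 0) x^(2j+1) / (2j+1).  Taking x = n^(-k) and summing over
   n >= 2, the terms j = 0 give zeta(k) - 1, while the terms j >= 1, summed over n first after
   exchanging the two sums of nonnegative terms, give C(k) >= 0; so h(k) = zeta(k) - 1 + C(k).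
   Comparing sum_(n >= 2) n^(-s) with 2^(-s) + int_2^oo t^(-s) dt gives
   zeta(s) - 1 <= 2^(-s) (1 + 2/(s-1)), so with s = k(2j+3) the j-th term of C(k) is at most
   (1/3) (1 + 2/(3k-1)) 2^(-3k) 4^(-kj), and a geometric series bounds C(k). *)

Section NonnegSeries.

Variable a : nat -> R.
Hypothesis a_ge0 : forall n, 0 <= a n.

Lemma sum_n_ge0 N : 0 <= sum_n a N.
Proof. rewrite sum_n_Reals; exact (cond_pos_sum a N a_ge0). Qed.

Lemma sum_n_le_S N : sum_n a N <= sum_n a (S N).
Proof. rewrite sum_Sn; unfold plus; simpl; specialize (a_ge0 (S N)); lra. Qed.

Lemma sum_n_le_is_series l N : is_series a l -> sum_n a N <= l.
Proof. intros Hl; exact (is_lim_seq_incr_compare _ l Hl sum_n_le_S N). Qed.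

Lemma term_le_is_series l N : is_series a l -> a N <= l.
Proof.
  intros Hl; eapply Rle_trans; [| exact (sum_n_le_is_series l N Hl)].
  destruct N as [|N]; [rewrite sum_O; lra|].
  rewrite sum_Sn; unfold plus; simpl; pose proof (sum_n_ge0 N); lra.
Qed.

Lemma Series_ge0 : ex_series a -> 0 <= Series a.
Proof.
  intros Ea; eapply Rle_trans; [apply (sum_n_ge0 0)|].
  exact (sum_n_le_is_series _ 0 (Series_correct _ Ea)).
Qed.

Lemma ex_series_bounded M : (forall N, sum_n a N <= M) -> ex_series a /\ Series a <= M.
Proof.
  intros HM.
  destruct (ex_finite_lim_seq_incr (sum_n a) M sum_n_le_S HM) as [l Hl].
  change (is_series a l) in Hl.
  split; [now exists l|].
  rewrite (is_series_unique a l Hl).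
  apply (is_lim_seq_le (sum_n a) (fun _ => M) l M); auto using is_lim_seq_const.
Qed.

Lemma ex_series_le_nonneg (b : nat -> R) :
  (forall n, a n <= b n) -> ex_series b -> ex_series a.
Proof.
  intros Hab; apply (@ex_series_le R_AbsRing R_CompleteNormedModule a b); intros n.
  unfold norm; simpl; unfold abs; simpl; rewrite Rabs_pos_eq; auto.
Qed.

End NonnegSeries.

Lemma Series_sum_n (u : nat -> nat -> R) M : (forall i, ex_series (u i)) ->
  ex_series (fun n => sum_n (fun i => u i n) M) /\
  Series (fun n => sum_n (fun i => u i n) M) = sum_n (fun i => Series (u i)) M.
Proof.
  intros Eu; induction M as [|M [IHe IHs]].
  - rewrite sum_O; split.
    + eapply ex_series_ext; [| apply (Eu 0%nat)]; intros; now rewrite sum_O.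
    + apply Series_ext; intros; now rewrite sum_O.
  - rewrite sum_Sn; unfold plus; simpl.
    assert (Hext : forall n, sum_n (fun i => u i n) M + u (S M) n
                             = sum_n (fun i => u i n) (S M))
      by (intros n; now rewrite sum_Sn).
    split.
    + eapply ex_series_ext; [exact Hext|].
      exact (@ex_series_plus R_AbsRing R_NormedModule _ _ IHe (Eu (S M))).
    + rewrite <- IHs, <- Series_plus by auto.
      apply Series_ext; intros n; rewrite <- Hext; reflexivity.
Qed.

(* Tonelli's theorem for double series with nonnegative terms. *)
Lemma Series_Series_swap_nonneg (u : nat -> nat -> R) (c : nat -> R) :
  (forall i n, 0 <= u i n) -> (forall n, is_series (fun i => u i n) (c n)) ->
  ex_series c ->
  ex_series (fun i => Series (u i)) /\ Series (fun i => Series (u i)) = Series c.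
Proof.
  intros u_ge0 Hc Ec.
  assert (Eu : forall i, ex_series (u i)).
  { intros i; apply (ex_series_le_nonneg _ (u_ge0 i) c); [| exact Ec].
    intros n; exact (term_le_is_series _ (fun i => u_ge0 i n) _ i (Hc n)). }
  assert (Hrows_ge0 : forall i, 0 <= Series (u i))
    by (intros i; exact (Series_ge0 _ (u_ge0 i) (Eu i))).
  assert (Hcols : forall n, Series (fun i => u i n) = c n)
    by (intros n; exact (is_series_unique _ _ (Hc n))).
  destruct (ex_series_bounded (fun i => Series (u i)) Hrows_ge0 (Series c))
    as [Erows Hle].
  { intros M; destruct (Series_sum_n u M Eu) as [_ <-].
    apply Series_le; [| exact Ec]; intros n; split.
    - apply sum_n_ge0; intros i; apply u_ge0.
    - apply (sum_n_le_is_series (fun i => u i n)); [intros i; apply u_ge0 | apply Hc]. }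
  split; [exact Erows|].
  apply Rle_antisym; [exact Hle|].
  assert (Hc_ge0 : forall n, 0 <= c n)
    by (intros n; rewrite <- Hcols; apply Series_ge0; [intros; apply u_ge0 | eexists; apply Hc]).
  apply (ex_series_bounded c Hc_ge0); intros N.
  rewrite (sum_n_ext _ (fun n => Series (fun i => u i n)))
    by (intros n; symmetry; apply Hcols).
  destruct (Series_sum_n (fun n i => u i n) N (fun n => ex_intro _ _ (Hc n))) as [_ <-].
  apply Series_le; [| exact Erows]; intros i; split.
  - apply sum_n_ge0; intros n; apply u_ge0.
  - apply (sum_n_le_is_series (u i)); [apply u_ge0 | apply Series_correct, Eu].
Qed.

Lemma CV_radius_ge_1 (a : nat -> R) : (forall n, Rabs (a n) <= 1) -> Rbar_le 1 (CV_radius a).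
Proof.
  intros Ha; destruct (CV_radius_bounded a) as [Hub _]; apply Hub.
  exists 1; intros n; rewrite pow1, Rmult_1_r; apply Ha.
Qed.

Lemma ex_pseries_bounded_coef (a : nat -> R) x :
  (forall n, Rabs (a n) <= 1) -> Rabs x < 1 -> ex_pseries a x.
Proof.
  intros Ha Hx; apply CV_radius_inside.
  apply (Rbar_lt_le_trans _ 1); [exact Hx | exact (CV_radius_ge_1 a Ha)].
Qed.

Lemma PSeries_const_1 y : Rabs y < 1 -> PSeries (fun _ => 1) y = / (1 - y).
Proof.
  intros Hy; apply is_pseries_unique.
  eapply is_series_ext; [| exact (is_series_geom y Hy)].
  intros n; unfold scal; simpl; unfold mult; simpl.
  rewrite Rmult_1_r; symmetry; apply pow_n_pow.
Qed.

Definition arctanh_coef (n : nat) : R := if Nat.even n then 0 else / INR n.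

Lemma arctanh_coef_even n : arctanh_coef (2 * n) = 0.
Proof. unfold arctanh_coef; now rewrite Nat.even_mul. Qed.

Lemma arctanh_coef_odd n : arctanh_coef (2 * n + 1) = / INR (2 * n + 1).
Proof. unfold arctanh_coef; now rewrite Nat.even_odd. Qed.

Lemma Rabs_arctanh_coef_le_1 n : Rabs (arctanh_coef n) <= 1.
Proof.
  unfold arctanh_coef; destruct (Nat.even n) eqn:En; [rewrite Rabs_R0; lra|].
  destruct n as [|n]; [discriminate|].
  assert (Hn : 1 <= INR (S n)) by (rewrite S_INR; pose proof (pos_INR n); lra).
  rewrite Rabs_pos_eq by (left; apply Rinv_0_lt_compat; lra).
  rewrite <- Rinv_1; apply Rinv_le_contravar; lra.
Qed.

Lemma PSeries_PS_derive_arctanh_coef x :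
  Rabs x < 1 -> PSeries (PS_derive arctanh_coef) x = / (1 - x ^ 2).
Proof.
  intros Hx.
  assert (Hx2 : Rabs (x ^ 2) < 1).
  { rewrite <- RPow_abs; pose proof (Rabs_pos x); nra. }
  assert (Heven : forall n, PS_derive arctanh_coef (2 * n) = 1).
  { intros n; unfold PS_derive; rewrite <- Nat.add_1_r, arctanh_coef_odd.
    field; apply not_0_INR; lia. }
  assert (Hodd : forall n, PS_derive arctanh_coef (2 * n + 1) = 0).
  { intros n; unfold PS_derive.
    replace (S (2 * n + 1)) with (2 * (n + 1))%nat by lia.
    rewrite arctanh_coef_even; ring. }
  rewrite PSeries_odd_even.
  - rewrite (PSeries_ext _ _ _ Heven), (PSeries_ext _ _ _ Hodd).
    rewrite PSeries_const_0, PSeries_const_1 by exact Hx2; ring.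
  - eapply ex_pseries_ext; [intros n; symmetry; apply Heven|].
    apply ex_pseries_bounded_coef; [intros; rewrite Rabs_R1; lra | exact Hx2].
  - eapply ex_pseries_ext; [intros n; symmetry; apply Hodd|].
    apply ex_pseries_bounded_coef; [intros; rewrite Rabs_R0; lra | exact Hx2].
Qed.

Lemma is_derive_arctanh x : -1 < x < 1 -> is_derive arctanh x (/ (1 - x ^ 2)).
Proof.
  intros Hx; unfold arctanh; auto_derive.
  - repeat split; try lra; apply Rdiv_lt_0_compat; lra.
  - field; split; [nra | lra].
Qed.

Lemma PSeries_arctanh_coef x : -1 < x < 1 -> PSeries arctanh_coef x = arctanh x.
Proof.
  intros Hx.
  set (g := fun t => arctanh t - PSeries arctanh_coef t).
  assert (Hg : forall t, -1 < t < 1 -> is_derive g t 0).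
  { intros t Ht.
    assert (Ht' : Rabs t < 1) by (apply Rabs_def1; lra).
    assert (Hr : Rbar_lt (Rabs t) (CV_radius arctanh_coef)).
    { apply (Rbar_lt_le_trans _ 1); [exact Ht' | apply CV_radius_ge_1, Rabs_arctanh_coef_le_1]. }
    replace 0 with (/ (1 - t ^ 2) - PSeries (PS_derive arctanh_coef) t)
      by (rewrite PSeries_PS_derive_arctanh_coef by exact Ht'; ring).
    exact (is_derive_minus _ _ t _ _ (is_derive_arctanh t Ht) (is_derive_PSeries _ t Hr)). }
  assert (Hbetween : forall t, Rmin 0 x <= t <= Rmax 0 x -> -1 < t < 1)
    by (intros t; unfold Rmin, Rmax; destruct Rle_dec; lra).
  assert (Hg0 : g 0 = 0).
  { unfold g, arctanh; rewrite PSeries_0; unfold arctanh_coef; simpl.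
    replace ((1 + 0) / (1 - 0)) with 1 by field; rewrite ln_1; field. }
  destruct (MVT_gen g 0 x (fun _ => 0)) as [c [_ Hc]].
  - intros t Ht; apply Hg, Hbetween; lra.
  - intros t Ht; apply continuity_pt_filterlim.
    apply (ex_derive_continuous g); exists 0; apply Hg, Hbetween, Ht.
  - rewrite Hg0 in Hc; unfold g in Hc; lra.
Qed.

Lemma is_series_arctanh x :
  -1 < x < 1 -> is_series (fun j => x ^ (2 * j + 1) / INR (2 * j + 1)) (arctanh x).
Proof.
  intros Hx.
  assert (Hx2 : Rabs (x ^ 2) < 1).
  { assert (Rabs x < 1) by (apply Rabs_def1; lra).
    rewrite <- RPow_abs; pose proof (Rabs_pos x); nra. }
  assert (Hodd : ex_pseries (fun n => arctanh_coef (2 * n + 1)) (x ^ 2))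
    by (apply ex_pseries_bounded_coef; [intros; apply Rabs_arctanh_coef_le_1 | exact Hx2]).
  assert (Heven : ex_pseries (fun n => arctanh_coef (2 * n)) (x ^ 2)).
  { eapply ex_pseries_ext; [intros n; symmetry; apply arctanh_coef_even|].
    apply ex_pseries_bounded_coef; [intros; rewrite Rabs_R0; lra | exact Hx2]. }
  rewrite <- (PSeries_arctanh_coef x Hx), (PSeries_odd_even _ _ Heven Hodd).
  rewrite (PSeries_ext _ _ _ arctanh_coef_even), PSeries_const_0, Rplus_0_l.
  eapply is_series_ext; [| exact (is_series_scal_l x _ _ (PSeries_correct _ _ Hodd))].
  intros n; cbv beta; rewrite arctanh_coef_odd, pow_n_pow, <- pow_mult, pow_add, pow_1.
  unfold scal; simpl; unfold mult; simpl; unfold Rdiv; ring.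
Qed.

Lemma pow_S_add_1_ge a m : 0 <= a -> a ^ S m + INR (S m) * a ^ m <= (a + 1) ^ S m.
Proof.
  intros Ha; induction m as [|m IH]; [simpl; lra|].
  pose proof (pow_le a m Ha); pose proof (pos_INR m).
  replace ((a + 1) ^ S (S m)) with ((a + 1) * (a + 1) ^ S m) by (simpl; ring).
  replace (a ^ S (S m)) with (a * a ^ S m) by (simpl; ring).
  replace (a ^ S m) with (a * a ^ m) in * by (simpl; ring).
  rewrite !S_INR in *; nra.
Qed.

(* Discrete form of (a+1)^(-m-1) <= int_a^(a+1) t^(-m-1) dt = (a^(-m) - (a+1)^(-m)) / m. *)
Lemma inv_pow_S_le_telescope a m : 1 <= a -> (1 <= m)%nat ->
  / (a + 1) ^ S m <= / (INR m * a ^ m) - / (INR m * (a + 1) ^ m).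
Proof.
  intros Ha Hm; destruct m as [|p]; [lia|].
  set (M := INR (S p)); set (A := a ^ S p); set (B := (a + 1) ^ S p).
  assert (HM : 0 < M) by (unfold M; apply lt_0_INR; lia).
  assert (HA : 0 < A) by (unfold A; apply pow_lt; lra).
  assert (HB : 0 < B) by (unfold B; apply pow_lt; lra).
  assert (Hkey : M * A <= (a + 1) * (B - A)).
  { pose proof (pow_S_add_1_ge a p ltac:(lra)) as Hb; fold M A B in Hb.
    pose proof (pow_le a p ltac:(lra)).
    replace A with (a * a ^ p) in * by (unfold A; simpl; ring); nra. }
  replace ((a + 1) ^ S (S p)) with ((a + 1) * B) by (unfold B; simpl; ring).
  assert (Hdiff : / (M * A) - / (M * B) - / ((a + 1) * B)
                  = ((a + 1) * (B - A) - M * A) / (M * A * B * (a + 1)))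
    by (field; repeat split; lra).
  assert (0 <= ((a + 1) * (B - A) - M * A) / (M * A * B * (a + 1)))
    by (apply Rdiv_le_0_compat; [lra|]; apply Rmult_lt_0_compat; [|lra];
        apply Rmult_lt_0_compat; [|lra]; apply Rmult_lt_0_compat; lra).
  lra.
Qed.

Definition zeta_tail (s n : nat) : R := / INR (n + 2) ^ s.

Lemma zeta_tail_gt0 s n : 0 < zeta_tail s n.
Proof. unfold zeta_tail; apply Rinv_0_lt_compat, pow_lt, lt_0_INR; lia. Qed.

Lemma zeta_tail_lt_1 s n : (1 <= s)%nat -> zeta_tail s n < 1.
Proof.
  intros Hs; unfold zeta_tail; rewrite <- Rinv_1.
  assert (H1 : 1 < INR (n + 2) ^ s).
  { apply Rlt_pow_R1; [|lia]; rewrite plus_INR; simpl; pose proof (pos_INR n); lra. }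
  apply Rinv_lt_contravar; lra.
Qed.

Lemma zeta_tail_pow s t n : zeta_tail s n ^ t = zeta_tail (s * t) n.
Proof. unfold zeta_tail; rewrite pow_inv, pow_mult; reflexivity. Qed.

Lemma Series_zeta_tail_le s : (2 <= s)%nat ->
  ex_series (zeta_tail s) /\ Series (zeta_tail s) <= (/ 2) ^ s * (1 + 2 / (INR s - 1)).
Proof.
  intros Hs; destruct s as [|m]; [lia|].
  (* [T N] is int_(N+2)^oo t^(-m-1) dt. *)
  set (T := fun N : nat => / (INR m * INR (N + 2) ^ m)).
  assert (HT : forall N, 0 <= T N).
  { intros N; unfold T; left; apply Rinv_0_lt_compat, Rmult_lt_0_compat.
    - apply lt_0_INR; lia.
    - apply pow_lt, lt_0_INR; lia. }
  assert (Htele : forall N, sum_n (zeta_tail (S m)) N + T N <= (/ 2) ^ S m + T 0%nat).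
  { induction N as [|N IH].
    - rewrite sum_O; unfold zeta_tail; rewrite pow_inv.
      replace (INR (0 + 2)) with 2 by (simpl; ring); lra.
    - rewrite sum_Sn; unfold plus; simpl.
      assert (zeta_tail (S m) (S N) <= T N - T (S N)).
      { unfold zeta_tail, T.
        replace (INR (S N + 2)) with (INR (N + 2) + 1) by (rewrite !plus_INR, (S_INR N); ring).
        apply inv_pow_S_le_telescope; [|lia].
        rewrite plus_INR; simpl; pose proof (pos_INR N); lra. }
      change ((/ 2) ^ S m) with (/ 2 * (/ 2) ^ m) in IH; lra. }
  apply ex_series_bounded; [intros n; left; apply zeta_tail_gt0|].
  intros N; specialize (Htele N); specialize (HT N).
  assert (INR m <> 0) by (apply not_0_INR; lia).
  assert (HT0 : (/ 2) ^ S m + T 0%nat = (/ 2) ^ S m * (1 + 2 / (INR (S m) - 1))).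
  { unfold T; rewrite S_INR, pow_inv; replace (INR (0 + 2)) with 2 by (simpl; ring); simpl.
    field; repeat split; try (apply pow_nonzero; lra).
    now replace (INR m + 1 - 1) with (INR m) by ring. }
  lra.
Qed.

Lemma zeta_eq_1_plus_Series_zeta_tail s : (2 <= s)%nat -> zeta s = 1 + Series (zeta_tail s).
Proof.
  intros Hs; destruct (Series_zeta_tail_le s Hs) as [E _].
  assert (Hshift : forall n, / INR (S n + 1) ^ s = zeta_tail s n)
    by (intros n; unfold zeta_tail; do 3 f_equal; lia).
  unfold zeta; rewrite Series_incr_1.
  - rewrite (Series_ext _ _ Hshift); simpl (INR (0 + 1)); rewrite pow1, Rinv_1; reflexivity.
  - apply ex_series_incr_1; exact (ex_series_ext _ _ (fun n => eq_sym (Hshift n)) E).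
Qed.

Lemma is_series_geom_scal c q : Rabs q < 1 -> is_series (fun j => c * q ^ j) (c * / (1 - q)).
Proof. intros Hq; exact (is_series_scal_l c _ _ (is_series_geom q Hq)). Qed.

Lemma pow_inv2_2k_bounds k : (2 <= k)%nat -> 0 < (/ 2) ^ (2 * k) <= / 16.
Proof.
  intros Hk; split; [apply pow_lt; lra|].
  replace (/ 16) with (/ 2 ^ 4) by (simpl; field).
  rewrite pow_inv; apply Rinv_le_contravar; [simpl; lra | apply Rle_pow; [lra | lia]].
Qed.

Section ZetaMinusOneMinusH.

Variable k : nat.
Hypothesis k_ge2 : (2 <= k)%nat.

Definition C_summand (n j : nat) : R := zeta_tail k n ^ (2 * j + 3) / INR (2 * j + 3).

Lemma C_summand_ge0 n j : 0 <= C_summand n j.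
Proof.
  apply Rdiv_le_0_compat; [apply pow_le; left; apply zeta_tail_gt0 | apply lt_0_INR; lia].
Qed.

Lemma is_series_C_summand_row n : is_series (C_summand n) (h_term k n - zeta_tail k n).
Proof.
  set (x := zeta_tail k n).
  assert (Hx : -1 < x < 1)
    by (pose proof (zeta_tail_gt0 k n); pose proof (zeta_tail_lt_1 k n ltac:(lia)); unfold x; lra).
  assert (Harc : is_series (fun j => x ^ (2 * j + 1) / INR (2 * j + 1))
                   (plus (h_term k n - x) (x ^ (2 * 0 + 1) / INR (2 * 0 + 1)))).
  { replace (plus _ _) with (arctanh x)
      by (change (h_term k n) with (arctanh x); unfold plus; simpl; field).
    exact (is_series_arctanh x Hx). }
  eapply is_series_ext; [| exact (@is_series_incr_1 R_AbsRing R_NormedModule _ _ Harc)].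
  intros j; unfold C_summand; now replace (2 * S j + 1)%nat with (2 * j + 3)%nat by lia.
Qed.

Lemma is_series_C_summand_col j : is_series (fun n => C_summand n j) (C_term k j).
Proof.
  assert (Hs : (2 <= k * (2 * j + 3))%nat) by nia.
  unfold C_term; rewrite zeta_eq_1_plus_Series_zeta_tail by exact Hs.
  replace (1 + Series (zeta_tail (k * (2 * j + 3))) - 1)
    with (Series (zeta_tail (k * (2 * j + 3)))) by ring.
  eapply is_series_ext;
    [| exact (is_series_scal_r _ _ _ (Series_correct _ (proj1 (Series_zeta_tail_le _ Hs))))].
  intros n; unfold C_summand, Rdiv; now rewrite zeta_tail_pow.
Qed.

Lemma C_term_ge0 j : 0 <= C_term k j.
Proof.
  eapply Rle_trans; [apply (C_summand_ge0 0 j)|].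
  exact (term_le_is_series _ (fun n => C_summand_ge0 n j) _ 0 (is_series_C_summand_col j)).
Qed.

Lemma C_term_le j :
  C_term k j <= / 3 * (1 + 2 / (3 * INR k - 1)) * (/ 2) ^ (3 * k) * ((/ 2) ^ (2 * k)) ^ j.
Proof.
  set (s := (k * (2 * j + 3))%nat).
  assert (Hs : (2 <= s)%nat) by (unfold s; nia).
  destruct (Series_zeta_tail_le s Hs) as [_ Hle].
  assert (HC : C_term k j = Series (zeta_tail s) / INR (2 * j + 3)).
  { unfold C_term; fold s; rewrite zeta_eq_1_plus_Series_zeta_tail by exact Hs.
    f_equal; ring. }
  assert (Hpow : (/ 2) ^ s = (/ 2) ^ (3 * k) * ((/ 2) ^ (2 * k)) ^ j)
    by (rewrite <- pow_mult, <- pow_add; f_equal; unfold s; lia).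
  assert (HK : 2 <= INR k) by (apply (le_INR 2); lia).
  assert (HU : 3 <= INR (2 * j + 3))
    by (rewrite plus_INR, mult_INR; simpl; pose proof (pos_INR j); lra).
  set (K := INR k) in *; set (U := INR (2 * j + 3)) in *.
  assert (Hfactor : (1 + 2 / (K * U - 1)) * / U <= / 3 * (1 + 2 / (3 * K - 1))).
  { rewrite Rmult_comm; apply Rmult_le_compat.
    - left; apply Rinv_0_lt_compat; lra.
    - assert (0 < 2 / (K * U - 1)) by (apply Rdiv_lt_0_compat; nra); lra.
    - apply Rinv_le_contravar; lra.
    - apply Rplus_le_compat_l, Rmult_le_compat_l; [lra|]; apply Rinv_le_contravar; nra. }
  assert (Hpos : 0 <= (/ 2) ^ (3 * k) * ((/ 2) ^ (2 * k)) ^ j)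
    by (apply Rmult_le_pos; [| apply pow_le]; apply pow_le; lra).
  assert (Hs_INR : INR s = K * U) by (unfold s, K, U; apply mult_INR).
  rewrite HC; rewrite Hpow, Hs_INR in Hle.
  apply Rle_trans with ((/ 2) ^ (3 * k) * ((/ 2) ^ (2 * k)) ^ j * (1 + 2 / (K * U - 1)) * / U).
  - apply Rmult_le_compat_r; [left; apply Rinv_0_lt_compat; lra | exact Hle].
  - rewrite Rmult_assoc.
    replace (/ 3 * (1 + 2 / (3 * K - 1)) * (/ 2) ^ (3 * k) * ((/ 2) ^ (2 * k)) ^ j)
      with ((/ 2) ^ (3 * k) * ((/ 2) ^ (2 * k)) ^ j * (/ 3 * (1 + 2 / (3 * K - 1)))) by ring.
    apply Rmult_le_compat_l; assumption.
Qed.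

Lemma is_series_C_term_majorant :
  is_series (fun j => / 3 * (1 + 2 / (3 * INR k - 1)) * (/ 2) ^ (3 * k) * ((/ 2) ^ (2 * k)) ^ j)
    (/ 3 * (1 + 2 / (3 * INR k - 1)) * ((/ 2) ^ (3 * k) / (1 - (/ 2) ^ (2 * k)))).
Proof.
  replace (/ 3 * (1 + 2 / (3 * INR k - 1)) * ((/ 2) ^ (3 * k) / (1 - (/ 2) ^ (2 * k))))
    with (/ 3 * (1 + 2 / (3 * INR k - 1)) * (/ 2) ^ (3 * k) * / (1 - (/ 2) ^ (2 * k)))
    by (unfold Rdiv; ring).
  apply is_series_geom_scal.
  pose proof (pow_inv2_2k_bounds k k_ge2); rewrite Rabs_pos_eq; lra.
Qed.

Lemma ex_series_C_term : ex_series (C_term k).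
Proof.
  apply (ex_series_le_nonneg _ C_term_ge0 _ C_term_le).
  eexists; exact is_series_C_term_majorant.
Qed.

Lemma Cconst_ge0 : 0 <= Cconst k.
Proof. exact (Series_ge0 _ C_term_ge0 ex_series_C_term). Qed.

Lemma Cconst_le :
  Cconst k <= / 3 * (1 + 2 / (3 * INR k - 1)) * ((/ 2) ^ (3 * k) / (1 - (/ 2) ^ (2 * k))).
Proof.
  rewrite <- (is_series_unique _ _ is_series_C_term_majorant).
  apply Series_le; [intros j; split; [apply C_term_ge0 | apply C_term_le]|].
  eexists; exact is_series_C_term_majorant.
Qed.

Lemma is_series_h_term_sub_zeta_tail :
  is_series (fun n => h_term k n - zeta_tail k n) (Cconst k).
Proof.
  destruct (Series_Series_swap_nonneg C_summand (C_term k) C_summand_ge0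
              is_series_C_summand_col ex_series_C_term) as [Erows Hswap].
  apply (is_series_ext (fun n => Series (C_summand n))).
  - intros n; exact (is_series_unique _ _ (is_series_C_summand_row n)).
  - unfold Cconst; rewrite <- Hswap; exact (Series_correct _ Erows).
Qed.

Lemma is_series_h_term : is_series (h_term k) (zeta k - 1 + Cconst k).
Proof.
  rewrite zeta_eq_1_plus_Series_zeta_tail by exact k_ge2.
  destruct (Series_zeta_tail_le k k_ge2) as [Ez _].
  apply (is_series_ext (fun n => zeta_tail k n + (h_term k n - zeta_tail k n)));
    [intros n; apply Rplus_minus|].
  replace (1 + Series (zeta_tail k) - 1 + Cconst k) with (Series (zeta_tail k) + Cconst k)
    by ring.
  exact (is_series_plus _ _ _ _ (Series_correct _ Ez) is_series_h_term_sub_zeta_tail).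
Qed.

Lemma Rabs_zeta_sub_1_sub_h : Rabs (zeta k - 1 - h k) = Cconst k.
Proof.
  unfold h; rewrite (is_series_unique _ _ is_series_h_term).
  replace (zeta k - 1 - (zeta k - 1 + Cconst k)) with (- Cconst k) by ring.
  rewrite Rabs_Ropp; apply Rabs_pos_eq, Cconst_ge0.
Qed.

Lemma Cconst_le_pow : Cconst k <= (/ 2) ^ (3 * k).
Proof.
  eapply Rle_trans; [apply Cconst_le|].
  pose proof (pow_inv2_2k_bounds k k_ge2) as Hq.
  assert (HK : 2 <= INR k) by (apply (le_INR 2); lia).
  assert (Hcoef : / 3 * (1 + 2 / (3 * INR k - 1)) * / (1 - (/ 2) ^ (2 * k)) <= 1).
  { assert (2 / (3 * INR k - 1) <= 2 / 5)
      by (apply Rmult_le_compat_l; [lra|]; apply Rinv_le_contravar; lra).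
    assert (/ (1 - (/ 2) ^ (2 * k)) <= 16 / 15)
      by (replace (16 / 15) with (/ (15 / 16)) by field; apply Rinv_le_contravar; lra).
    assert (0 < / (1 - (/ 2) ^ (2 * k))) by (apply Rinv_0_lt_compat; lra).
    assert (0 <= 2 / (3 * INR k - 1)) by (apply Rdiv_le_0_compat; lra).
    nra. }
  pose proof (pow_lt (/ 2) (3 * k) ltac:(lra)).
  unfold Rdiv at 2; nra.
Qed.

End ZetaMinusOneMinusH.

Theorem theorem5p2 :
  (forall k : nat, (2 <= k)%nat ->
     ex_series (h_term k) /\ ex_series (C_term k) /\
     Rabs (zeta k - 1 - h k) = Cconst k /\
     Cconst k <= / 3 * (1 + 2 / (3 * INR k - 1)) * ((/ 2) ^ (3 * k) / (1 - (/ 2) ^ (2 * k))))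
  /\
  (exists M : R, forall k : nat, (2 <= k)%nat -> Rabs (Cconst k) <= M * (/ 2) ^ (3 * k)).
Proof.
  split.
  - intros k Hk; repeat split.
    + eexists; exact (is_series_h_term k Hk).
    + exact (ex_series_C_term k Hk).
    + exact (Rabs_zeta_sub_1_sub_h k Hk).
    + exact (Cconst_le k Hk).
  - exists 1; intros k Hk.
    rewrite Rabs_pos_eq, Rmult_1_l by exact (Cconst_ge0 k Hk).
    exact (Cconst_le_pow k Hk).
Qed.
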